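(* Let $\Gamma$ be a distance-regular graph with valency $k$ and diameter $D\geq 2$, and let $\alpha=\lceil \frac{k}{a_1+1}\rceil$. Then $$c_2-1\geq \frac{\alpha(a_1+1)-k}{\binom{\alpha}{2}},$$ and if equality holds then $\Gamma$ is a Terwilliger graph.
   Context: A connected graph $\Gamma$ of diameter $D$ is distance-regular if there are integers $b_i,c_i$ ($0\le i\le D$) such that for any two vertices $x,y$ at distance $i$, exactly $c_i$ neighbours of $y$ are at distance $i-1$ from $x$ and exactly $b_i$ neighbours of $y$ are at distance $i+1$ from $x$. Then $\Gamma$ is regular of valency $k=b_0$, and $a_i:=k-b_i-c_i$. A Terwilliger graph is a connected non-complete graph such that for any two vertices $u,v$ at distance two, the subgraph induced on their common neighbours is a clique of size $\mu$, for some fixed $\mu\geq 1$. *)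

From mathcomp Require Import all_boot all_order all_algebra.
Set Implicit Arguments. Unset Strict Implicit. Unset Printing Implicit Defensive.

Section Graph.
Variable T : finType.
Variable e : rel T.

Definition simple_graph := symmetric e /\ irreflexive e.

Fixpoint ball (n : nat) (x : T) : {set T} :=
  match n with
  | 0 => [set x]
  | n.+1 => ball n x :|: [set y | [exists z in ball n x, e z y]]
  end.

Definition connected_graph := forall x y : T, exists n, y \in ball n x.

(* graph distance: least n with y in ball n x (all distances in a connected
   graph on T are < #|T|; the value #|T| would signal "unreachable") *)
Definition dist (x y : T) : nat :=
  find (fun n => y \in ball n x) (iota 0 #|T|).

Definition diameter : nat := \max_(x : T) \max_(y : T) dist x y.

Definition distance_regular (b c : nat -> nat) :=
  connected_graph /\
  forall x y : T,
    (0 < dist x y -> #|[set z | e y z & dist x z == (dist x y).-1]| = c (dist x y)) /\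
    #|[set z | e y z & dist x z == (dist x y).+1]| = b (dist x y).

Definition is_clique (A : {set T}) :=
  forall u v, u \in A -> v \in A -> u != v -> e u v.

Definition common_nbrs (u v : T) : {set T} := [set z | e u z & e v z].

Definition complete_graph := forall u v : T, u != v -> e u v.

Definition terwilliger :=
  connected_graph /\ ~ complete_graph /\
  exists mu : nat, 1 <= mu /\
    forall u v : T, dist u v = 2 ->
      is_clique (common_nbrs u v) /\ #|common_nbrs u v| = mu.

End Graph.

From mathcomp Require Import all_boot all_order all_algebra.
From mathcomp Require Import zify.
Set Implicit Arguments. Unset Strict Implicit. Unset Printing Implicit Defensive.
Import Order.TTheory GRing.Theory Num.Theory.

(* Fix a vertex x, let k = |Γ(x)|, and take a coclique S of size α inside Γ(x);
   it exists greedily, since every vertex of Γ(x) together with its a1 neighbours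
   there covers a1 + 1 vertices of Γ(x) and (α - 1)(a1 + 1) < k.  For z in Γ(x) let
   m(z) be the number of s in S with z = s or z ~ s.  Then Σ m = α(a1 + 1) and
   Σ m^2 = α(a1 + 1) + Σ_{s <> s'} |Γ(s) ∩ Γ(s') ∩ Γ(x)|, where each overlap is at
   most c2 - 1 because x is one more common neighbour of s and s'.  Summing
   (m - 1)(m - 2) >= 0 over Γ(x) gives α(a1 + 1) <= k + C(α, 2)(c2 - 1).  If some
   μ-graph Γ(u) ∩ Γ(v) contains two non-adjacent vertices u', v', choose x = u' and
   S containing u and v: then v' is a second common neighbour of u and v outside
   Γ(x), and the inequality becomes strict. *)

Lemma card_set_in_sum (T : finType) (A : {set T}) (P : pred T) :
  #|[set t in A | P t]| = \sum_(t in A) P t.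
Proof. by rewrite -sum1dep_card big_mkcondr /=; apply: eq_bigr => t _; case: (P t). Qed.

Section Counting.
Variables I J : finType.

Lemma leq_sum_deficit (A : {set I}) (F : I -> nat) B :
  (forall t, t \in A -> F t <= B) ->
  \sum_(t in A) F t + #|[set t in A | F t < B]| <= #|A| * B.
Proof.
move=> leFB; rewrite card_set_in_sum -big_split -sum_nat_const /=.
by apply: leq_sum => t /leFB; case: ltnP => [ltFB _|_]; rewrite /= ?addn1 ?addn0.
Qed.

Lemma offdiag_sum_leq (S U : {set I}) (F : I -> I -> nat) B :
  (forall s s', s \in S -> s' \in S -> s != s' -> F s s' <= B) ->
  U \subset S -> (forall s, s \in U -> exists2 s', s' \in S :\ s & F s s' < B) ->
  \sum_(s in S) \sum_(s' in S :\ s) F s s' + #|U| <= #|S| * (#|S|.-1 * B).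
Proof.
move=> leFB sUS hU.
have row s : s \in S ->
    \sum_(s' in S :\ s) F s s' + #|[set s' in S :\ s | F s s' < B]| <= #|S|.-1 * B.
  move=> sS; rewrite (cardsD1 s S) sS add1n /=.
  by apply: leq_sum_deficit => s'; rewrite !inE => /andP[ne s'S]; rewrite leFB // eq_sym.
apply: leq_trans (leq_sum_deficit (fun s sS => leq_trans (leq_addr _ _) (row s sS))).
rewrite leq_add2l; apply/subset_leq_card/subsetP => s sU.
have sS := subsetP sUS s sU; have [s' s'S ltFB] := hU s sU.
rewrite inE sS; apply: leq_trans (row s sS); rewrite -addn1 leq_add2l card_gt0.
by apply/set0Pn; exists s'; rewrite inE s'S.
Qed.

Variable r : I -> J -> bool.

Definition overlap (D : {set J}) (s s' : I) := #|[set z in D | r s z && r s' z]|.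

Lemma overlap_sq_ineq (S : {set I}) (D : {set J}) :
  3 * \sum_(s in S) overlap D s s <= \sum_(s in S) \sum_(s' in S) overlap D s s' + 2 * #|D|.
Proof.
pose m z := \sum_(s in S) r s z.
have sum_m : \sum_(s in S) overlap D s s = \sum_(z in D) m z.
  rewrite exchange_big; apply: eq_bigr => s _.
  rewrite /overlap (card_set_in_sum D (fun z => r s z && r s z)).
  by apply: eq_bigr => z _; rewrite andbb.
have sum_m2 : \sum_(s in S) \sum_(s' in S) overlap D s s' = \sum_(z in D) m z * m z.
  under [RHS]eq_bigr => z _ do rewrite big_distrl /=.
  under [RHS]eq_bigr => z _ do under eq_bigr => s _ do rewrite big_distrr /=.
  rewrite [RHS]exchange_big; apply: eq_bigr => s _.
  rewrite [RHS]exchange_big; apply: eq_bigr => s' _.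
  rewrite /overlap (card_set_in_sum D (fun z => r s z && r s' z)).
  by apply: eq_bigr => z _; rewrite mulnb.
rewrite sum_m sum_m2 [2 * _]mulnC -sum_nat_const !big_distrr -big_split /=.
(* pointwise, 3 m <= m ^ 2 + 2 since (m - 1) (m - 2) >= 0 *)
by apply: leq_sum => z _; case: (m z) => [|[|n]] //; nia.
Qed.

End Counting.

Section SimpleGraph.
Variables (T : finType) (e : rel T).
Hypotheses (e_sym : symmetric e) (e_irr : irreflexive e).

Lemma in_ball1 x y : (y \in ball e 1 x) = (y == x) || e x y.
Proof.
rewrite /= !inE; congr (_ || _); apply/existsP/idP => [[z]|exy].
  by rewrite inE => /andP[/eqP ->].
by exists x; rewrite !inE eqxx.
Qed.

Lemma ball_step n x z y : z \in ball e n x -> e z y -> y \in ball e n.+1 x.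
Proof. by move=> zn ezy; rewrite /= !inE; apply/orP; right; apply/exists_inP; exists z. Qed.

Lemma dist_leq_ball n x y : y \in ball e n x -> dist e x y <= n.
Proof.
move=> yn; rewrite /dist; case: (ltnP n #|T|) => [ltnT|leTn].
  by rewrite leqNgt; apply/negP => /(before_find 0); rewrite nth_iota // add0n yn.
by apply: leq_trans leTn; rewrite -{2}(size_iota 0 #|T|) find_size.
Qed.

Lemma notin_ball_dist i x y : i < dist e x y -> y \notin ball e i x.
Proof.
rewrite /dist => lti; have ltiT : i < #|T|.
  by apply: leq_trans lti _; rewrite -{2}(size_iota 0 #|T|) find_size.
by have := before_find 0 lti; rewrite nth_iota // add0n => ->.
Qed.

Lemma in_ball_dist x y : dist e x y < #|T| -> y \in ball e (dist e x y) x.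
Proof.
rewrite /dist => ltT; have hasy : has (fun n => y \in ball e n x) (iota 0 #|T|).
  by rewrite has_find size_iota.
by have := nth_find 0 hasy; rewrite nth_iota // add0n.
Qed.

Lemma dist_eq0 x y : (dist e x y == 0) = (y == x).
Proof.
apply/idP/idP => [/eqP d0|/eqP ->]; last by rewrite -leqn0 dist_leq_ball //= inE.
have /in_ball_dist : dist e x y < #|T| by rewrite d0; apply/card_gt0P; exists x.
by rewrite d0 /= inE.
Qed.

Lemma dist_eq1 x y : (dist e x y == 1) = e x y.
Proof.
apply/idP/idP => [/eqP d1|exy].
  have yx : y != x by rewrite -dist_eq0 d1.
  have /in_ball_dist : dist e x y < #|T|.
    by rewrite d1; apply/card_gt1P; exists x, y; rewrite eq_sym yx.
  by rewrite d1 in_ball1 (negbTE yx).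
have yx : y != x by apply: contraTneq exy => ->; rewrite e_irr.
by rewrite eqn_leq dist_leq_ball ?in_ball1 ?exy ?orbT //= lt0n dist_eq0.
Qed.

Lemma dist_eq2 x s s' : s != s' -> ~~ e s s' -> e x s -> e x s' -> dist e s s' = 2.
Proof.
move=> ss' nes exs exs'; apply/eqP; rewrite eqn_leq dist_leq_ball; last first.
  by apply: (@ball_step 1 _ x); rewrite // in_ball1 e_sym exs orbT.
by rewrite ltnNge leq_eqVlt ltnS leqn0 dist_eq0 dist_eq1 eq_sym (negbTE ss') (negbTE nes).
Qed.

Lemma escape_ball1 m x y : y \in ball e m x -> y \notin ball e 1 x ->
  exists w z, [/\ e x w, e w z & z \notin ball e 1 x].
Proof.
elim: m y => [|m IH] y; first by rewrite inE in_ball1 => ->.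
rewrite [ball e m.+1 x]/= inE => /orP[/IH//|]; rewrite inE => /exists_inP[w wm ewy] y1.
case: (boolP (w \in ball e 1 x)) => [|/(IH w wm)//].
rewrite in_ball1 => /orP[/eqP wx|exw]; last by exists w, y.
by move: y1; rewrite in_ball1 -wx ewy orbT.
Qed.

Lemma induced_path2 : connected_graph e -> 2 <= diameter e ->
  exists x w z, [/\ e x w, e w z, z != x & ~~ e x z].
Proof.
move=> conn diam; have [x [y lt1]] : exists x y, 1 < dist e x y.
  case: (pickP (fun x => [exists y, 1 < dist e x y])) => [x /existsP[y lt1]|none].
    by exists x, y.
  move: diam; rewrite leqNgt ltnS => /negP[]; apply/bigmax_leqP => x _.
  by apply/bigmax_leqP => y _; move/existsPn/(_ y): (none x); rewrite -leqNgt.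
have [m ym] := conn x y.
have [w [z [exw ewz]]] := escape_ball1 ym (notin_ball_dist lt1).
by rewrite in_ball1 negb_or => /andP[zx nexz]; exists x, w, z.
Qed.

Definition nbrs x := [set y | e x y].
Definition cadj s z := (z == s) || e s z.
Definition coclique (S : {set T}) := {in S &, forall s s', s != s' -> ~~ e s s'}.

Lemma overlap_cadj_nonadj x s s' : s != s' -> ~~ e s s' ->
  overlap cadj (nbrs x) s s' = #|common_nbrs e s s' :&: nbrs x|.
Proof.
move=> ss' nes; apply: eq_card => z; rewrite !inE /cadj.
case: (eqVneq z s) => [->|zs].
  by rewrite e_irr (negbTE ss') (e_sym s') (negbTE nes) !andbF.
case: (eqVneq z s') => [->|zs'] /=; last by rewrite andbC.
by rewrite e_irr e_sym (negbTE nes) !andbF.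
Qed.

Section CocliqueExtension.
Variables (D : {set T}) (a : nat).
Hypothesis cdeg_D : forall s, s \in D -> #|[set z in D | cadj s z]| = a.+1.

Lemma coclique_extend1 (S : {set T}) : S \subset D -> coclique S ->
  #|S| * a.+1 < #|D| -> exists2 z, z \in D :\: S & coclique (z |: S).
Proof.
move=> sSD cocS ltD.
have sum_cadj : \sum_(z in D) \sum_(s in S) cadj s z = #|S| * a.+1.
  rewrite exchange_big -sum_nat_const; apply: eq_bigr => s sS.
  by rewrite -(cdeg_D (subsetP sSD s sS)) card_set_in_sum.
have [z zD] : exists2 z, z \in D & \sum_(s in S) cadj s z == 0.
  apply/exists_inP; move: ltD; rewrite -sum_cadj; apply: contraLR => /exists_inPn pos.
  by rewrite -leqNgt -sum1_card; apply: leq_sum => z /pos; rewrite lt0n.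
rewrite sum_nat_eq0 => /forall_inP uncovered.
have ncadj s : s \in S -> ~~ cadj s z by move/uncovered; rewrite eqb0.
have zS : z \notin S by apply/negP => /ncadj; rewrite /cadj eqxx.
exists z; first by rewrite inE zS zD.
move=> s s'; rewrite !inE => /orP[/eqP->|sS] /orP[/eqP->|s'S]; rewrite ?eqxx //.
- by move=> _; move/ncadj: s'S; rewrite /cadj negb_or e_sym => /andP[].
- by move=> _; move/ncadj: sS; rewrite /cadj negb_or => /andP[].
- exact: cocS.
Qed.

Lemma coclique_extend (S0 : {set T}) n : n.-1 * a.+1 < #|D| ->
  S0 \subset D -> coclique S0 -> #|S0| <= n ->
  exists S : {set T}, [/\ S0 \subset S, S \subset D, coclique S & #|S| = n].
Proof.
move=> ltD; have [m] := ubnP (n - #|S0|); elim: m S0 => // m IH S0 ltm sS0D cocS0 leS0n.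
have [ltS0n|geS0n] := ltnP #|S0| n; last first.
  by exists S0; split=> //; apply/eqP; rewrite eqn_leq leS0n.
have leS0n1 : #|S0| <= n.-1 by lia.
have [z /setDP[zD zS0] cocz] :=
  coclique_extend1 sS0D cocS0 (leq_ltn_trans (leq_mul leS0n1 (leqnn _)) ltD).
have [|||S [zS0S SD cocS cardS]] := IH (z |: S0) _ _ cocz.
- by rewrite cardsU1 zS0; lia.
- by rewrite subUset sub1set zD.
- by rewrite cardsU1 zS0.
by exists S; split=> //; apply: subset_trans zS0S; apply: subsetUr.
Qed.

End CocliqueExtension.

End SimpleGraph.

Section DistanceRegular.
Variables (T : finType) (e : rel T) (b c : nat -> nat).
Hypotheses (e_sym : symmetric e) (e_irr : irreflexive e) (e_drg : distance_regular e b c).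

Local Notation a1 := (b 0 - b 1 - c 1).
Local Notation overlap_at x := (overlap (cadj e) (nbrs e x)).

Lemma card_nbrs x : #|nbrs e x| = b 0.
Proof.
have [_] := e_drg.2 x x; have /eqP -> : dist e x x == 0 by rewrite dist_eq0.
by move=> <-; apply: eq_card => z; rewrite !inE (dist_eq1 e_irr) andbb.
Qed.

Lemma card_common_nbrs_dist2 u v : dist e u v = 2 -> #|common_nbrs e u v| = c 2.
Proof.
have [dc _] := e_drg.2 u v; move=> duv; rewrite duv in dc; rewrite -dc //.
by apply: eq_card => z; rewrite !inE (dist_eq1 e_irr) andbC.
Qed.

Lemma card_common_nbrs_adj x y : e x y -> #|common_nbrs e x y| = a1.
Proof.
move=> exy; have [dc db] := e_drg.2 x y.
have /eqP dxy : dist e x y == 1 by rewrite (dist_eq1 e_irr).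
rewrite dxy /= in dc db; have {}dc := dc isT.
pose at_dist i := [set z | dist e x z == i].
rewrite -(card_nbrs y) -(cardsID (at_dist 0) (nbrs e y)) -(cardsID (at_dist 1) (_ :\: _)).
have -> : nbrs e y :&: at_dist 0 = [set z | e y z & dist e x z == 0].
  by apply/setP => z; rewrite !inE.
have -> : (nbrs e y :\: at_dist 0) :&: at_dist 1 = common_nbrs e x y.
  apply/setP => z; rewrite !inE -(dist_eq1 e_irr x z).
  by case: (eqVneq (dist e x z) 1) => [->|_]; rewrite /= ?andbT ?andbF.
have -> : (nbrs e y :\: at_dist 0) :\: at_dist 1 = [set z | e y z & dist e x z == 2].
  apply/setP => z; rewrite !inE; case eyz: (e y z); rewrite ?andbF //=.
  have : dist e x z <= 2.
    by apply: dist_leq_ball; apply: (@ball_step _ _ 1 _ y); rewrite // in_ball1 exy orbT.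
  by case: (dist e x z) => [|[|[|n]]].
rewrite dc db; lia.
Qed.

Lemma card_cnbrs_local x s :
  s \in nbrs e x -> #|[set z in nbrs e x | cadj e s z]| = a1.+1.
Proof.
rewrite inE => exs; rewrite -(card_common_nbrs_adj exs) -[RHS]add1n.
have -> : [set z in nbrs e x | cadj e s z] = s |: common_nbrs e x s.
  apply/setP => z; rewrite !inE /cadj; case: (eqVneq z s) => [->|_] //=.
  by rewrite andbC.
by rewrite cardsU1 !inE e_irr andbF.
Qed.

Lemma overlap_local_leq x s s' (Y : {set T}) :
  s \in nbrs e x -> s' \in nbrs e x -> s != s' -> ~~ e s s' ->
  Y \subset common_nbrs e s s' :\: nbrs e x -> overlap_at x s s' + #|Y| <= c 2.
Proof.
rewrite !inE => exs exs' ss' nes sY.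
have dss' := dist_eq2 e_sym e_irr ss' nes exs exs'.
rewrite overlap_cadj_nonadj // -(card_common_nbrs_dist2 dss').
by rewrite -(cardsID (nbrs e x) (common_nbrs e s s')) leq_add2l subset_leq_card.
Qed.

Lemma coclique_count x (S U : {set T}) :
  S \subset nbrs e x -> coclique e S -> U \subset S ->
  (forall s, s \in U -> exists2 s', s' \in S :\ s & overlap_at x s s' < c 2 - 1) ->
  2 * (#|S| * a1.+1) + #|U| <= #|S| * (#|S|.-1 * (c 2 - 1)) + 2 * b 0.
Proof.
move=> sSN cocS sUS partner.
have leq_c2 s s' : s \in S -> s' \in S -> s != s' -> overlap_at x s s' <= c 2 - 1.
  move=> sS s'S ss'; have Ns := subsetP sSN s sS; have Ns' := subsetP sSN s' s'S.
  have xY : [set x] \subset common_nbrs e s s' :\: nbrs e x.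
    by move: Ns Ns'; rewrite sub1set !inE e_irr (e_sym s) (e_sym s') => -> ->.
  by have := overlap_local_leq Ns Ns' ss' (cocS s s' sS s'S ss') xY; rewrite cards1; lia.
have offdiag := offdiag_sum_leq leq_c2 sUS partner.
have diag : \sum_(s in S) overlap_at x s s = #|S| * a1.+1.
  rewrite -sum_nat_const; apply: eq_bigr => s sS.
  rewrite -(card_cnbrs_local (subsetP sSN s sS)).
  by apply: eq_card => z; rewrite !inE andbb.
have := overlap_sq_ineq (cadj e) S (nbrs e x); rewrite card_nbrs diag.
under eq_bigr => s sS do rewrite (big_setD1 s sS) /=.
rewrite big_split /= diag; lia.
Qed.

Lemma local_degree_lt x w z : e x w -> e w z -> z != x -> ~~ e x z -> a1.+1 < b 0.
Proof.
move=> exw ewz zx nexz; have ewx : e w x by rewrite e_sym.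
have sub : common_nbrs e w x \subset nbrs e w :\ x :\ z.
  apply/subsetP => y; rewrite !inE => /andP[ewy exy].
  rewrite ewy andbT; apply/andP; split.
  - by apply: contraNneq nexz => <-.
  - by apply: contraTneq exy => ->; rewrite e_irr.
rewrite -(card_common_nbrs_adj ewx) -(card_nbrs w); have := subset_leq_card sub.
rewrite (cardsD1 x (nbrs e w)) (cardsD1 z (nbrs e w :\ x)) !inE zx ewz ewx; lia.
Qed.

Lemma c2_gt0 x w z : e x w -> e w z -> z != x -> ~~ e x z -> 0 < c 2.
Proof.
move=> exw ewz zx nexz; have ewx : e w x by rewrite e_sym.
have xz : x != z by rewrite eq_sym.
rewrite -(card_common_nbrs_dist2 (dist_eq2 e_sym e_irr xz nexz ewx ewz)).
by apply/card_gt0P; exists w; rewrite !inE exw e_sym.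
Qed.

Section CocliqueOfSizeN.
Variable n : nat.
Hypothesis lt_nbrs : n.-1 * a1.+1 < b 0.

Lemma coclique_count_extend x (S0 U : {set T}) :
  S0 \subset nbrs e x -> coclique e S0 -> #|S0| <= n -> U \subset S0 ->
  (forall s, s \in U -> exists2 s', s' \in S0 :\ s & overlap_at x s s' < c 2 - 1) ->
  2 * (n * a1.+1) + #|U| <= 2 * ('C(n, 2) * (c 2 - 1)) + 2 * b 0.
Proof.
move=> sS0N cocS0 leS0n sUS0 partner.
have [|S [sS0S sSN cocS cardS]] :=
    coclique_extend e_sym (@card_cnbrs_local x) _ sS0N cocS0 leS0n.
  by rewrite card_nbrs.
have partnerS s : s \in U -> exists2 s', s' \in S :\ s & overlap_at x s s' < c 2 - 1.
  move=> sU; have [s' s'S0 lt] := partner s sU; exists s' => //.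
  by move: s'S0; rewrite !inE => /andP[-> /(subsetP sS0S)].
have := coclique_count sSN cocS (subset_trans sUS0 sS0S) partnerS.
have bin2n : n * n.-1 = 2 * 'C(n, 2) by rewrite -(bin1 n.-1) mul_bin_diag.
by rewrite cardS [n * (_ * _)]mulnA bin2n -mulnA.
Qed.

Lemma coclique_bound (x : T) : n * a1.+1 <= b 0 + 'C(n, 2) * (c 2 - 1).
Proof.
have := coclique_count_extend (x := x) (S0 := set0) (U := set0) (sub0set _) _ _ (sub0set _).
rewrite cards0 addn0 -mulnDr leq_pmul2l // addnC => -> //; last by move=> s; rewrite inE.
by move=> s s'; rewrite inE.
Qed.

Lemma coclique_bound_strict u v u' v' : 1 < n -> dist e u v = 2 ->
  u' \in common_nbrs e u v -> v' \in common_nbrs e u v -> u' != v' -> ~~ e u' v' ->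
  n * a1.+1 < b 0 + 'C(n, 2) * (c 2 - 1).
Proof.
move=> lt1n duv; rewrite !inE => /andP[euu' evu'] /andP[euv' evv'] u'v' nu'v'.
have uv : u != v by rewrite eq_sym -(dist_eq0 e) duv.
have nuv : ~~ e u v by rewrite -(dist_eq1 e_irr) duv.
have lt_c2 s s' : e u' s -> e u' s' -> s != s' -> ~~ e s s' -> e s v' -> e s' v' ->
    overlap_at u' s s' < c 2 - 1.
  move=> eu's eu's' ss' nes esv' es'v'.
  have Y : [set u'; v'] \subset common_nbrs e s s' :\: nbrs e u'.
    by rewrite subUset !sub1set !inE e_irr nu'v' esv' es'v' (e_sym s) (e_sym s') eu's eu's'.
  have := overlap_local_leq _ _ ss' nes Y; rewrite !inE cards2 u'v' /= => /(_ eu's eu's').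
  by rewrite addn2 ltn_subRL add1n.
have eu'u : e u' u by rewrite e_sym.
have eu'v : e u' v by rewrite e_sym.
have S0N : [set u; v] \subset nbrs e u' by rewrite subUset !sub1set !inE eu'u eu'v.
have cocS0 : coclique e [set u; v].
  move=> s s'; rewrite !inE => /orP[]/eqP-> /orP[]/eqP->; rewrite ?eqxx // => _.
  by rewrite e_sym.
have partner s : s \in [set u; v] ->
    exists2 s', s' \in [set u; v] :\ s & overlap_at u' s s' < c 2 - 1.
  rewrite !inE => /orP[]/eqP->; [exists v | exists u]; rewrite ?inE ?eqxx ?orbT ?andbT.
  - by rewrite eq_sym.
  - exact: lt_c2 eu'u eu'v uv nuv euv' evv'.
  - by [].
  - by apply: lt_c2 eu'v eu'u _ _ evv' euv'; rewrite 1?eq_sym 1?e_sym.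
have := coclique_count_extend S0N cocS0 _ (subxx _) partner; rewrite cards2 uv /=.
move=> /(_ lt1n); move: (n * a1.+1) ('C(n, 2) * (c 2 - 1)) (b 0) => X Y Z; lia.
Qed.

End CocliqueOfSizeN.

End DistanceRegular.

Lemma predn_ceil_div_lt k d : 0 < k -> ((k + d) %/ d.+1).-1 * d.+1 < k.
Proof.
move=> k_gt0; have := leq_trunc_div (k + d) d.+1.
by case: ((k + d) %/ d.+1) => [|q] //=; rewrite mulSn; lia.
Qed.

Lemma ceil_div_gt1 k d : d.+2 <= k -> 1 < (k + d) %/ d.+1.
Proof. by move=> ltdk; rewrite leq_divRL //; lia. Qed.

Local Open Scope ring_scope.

Section Ratio.
Variables (R : numFieldType) (A k C m : nat).
Hypotheses (C_gt0 : (0 < C)%N) (m_gt0 : (0 < m)%N).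

Let pred_m : m%:R - 1 = (m - 1)%:R :> R.
Proof. by rewrite natrB. Qed.

Lemma ler_ratio_subr1 :
  ((A%:R - k%:R) / C%:R <= m%:R - 1 :> R) = (A <= k + C * (m - 1))%N.
Proof.
by rewrite ler_pdivrMr ?ltr0n // pred_m -natrM lerBlDr -natrD ler_nat addnC mulnC.
Qed.

Lemma ltr_ratio_subr1 :
  ((A%:R - k%:R) / C%:R < m%:R - 1 :> R) = (A < k + C * (m - 1))%N.
Proof.
by rewrite ltr_pdivrMr ?ltr0n // pred_m -natrM ltrBlDr -natrD ltr_nat addnC mulnC.
Qed.

End Ratio.

Theorem theorem4 (T : finType) (e : rel T) (b c : nat -> nat) :
  simple_graph e -> distance_regular e b c -> (2 <= diameter e)%N ->
  let k := b 0%N in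
  let a1 := (k - b 1%N - c 1%N)%N in
  let alpha := ((k + a1) %/ (a1 + 1))%N in   (* = ceil (k / (a1+1)) *)
  let q := ((alpha * (a1 + 1))%:R - k%:R) / ('C(alpha, 2))%:R : rat in
  ((c 2%N)%:R - 1 >= q) /\ ((c 2%N)%:R - 1 = q -> terwilliger e).
Proof.
move=> [e_sym e_irr] drg diam k a1 al q.
have [x [w [z [exw ewz zx nexz]]]] := induced_path2 drg.1 diam.
have c2_gt0 := c2_gt0 e_sym e_irr drg exw ewz zx nexz.
have a1_lt := local_degree_lt e_sym e_irr drg exw ewz zx nexz.
have al_gt1 : (1 < al)%N by rewrite /al addn1 ceil_div_gt1.
have lt_nbrs : (al.-1 * a1.+1 < k)%N.
  by rewrite /al addn1 predn_ceil_div_lt // (leq_trans _ a1_lt).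
have C_gt0 : (0 < 'C(al, 2))%N by rewrite bin_gt0.
split.
  rewrite /q ler_ratio_subr1 // addn1.
  exact (coclique_bound e_sym e_irr drg lt_nbrs x).
move=> q_eq; split; first exact: drg.1.
split; first by move=> complete; move: nexz; rewrite complete // eq_sym.
exists (c 2%N); split=> // u v duv; split; last exact (card_common_nbrs_dist2 e_irr drg duv).
move=> u' v' u'uv v'uv u'v'; apply/negPn/negP => nu'v'.
suff : q < (c 2%N)%:R - 1 by rewrite q_eq ltxx.
rewrite /q ltr_ratio_subr1 // addn1.
exact (coclique_bound_strict e_sym e_irr drg lt_nbrs al_gt1 duv u'uv v'uv u'v' nu'v').
Qed.
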